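(* Let $m\ge1$, $C>0$, $\mathbf{y}\in\{-1,1\}^m$, let $\mathbf{Q}\in\mathbb{R}^{m\times m}$ be a symmetric positive semidefinite kernel matrix on the labeled nodes, let $\mathcal{T}$ be a finite set of test nodes with kernel values $Q_{ti}$ ($t\in\mathcal{T}$, $i\in[m]$). Let $\boldsymbol\alpha^*\in\mathcal{S}(\mathbf{y})$, $\hat p_t=\sum_{i=1}^m y_i\alpha_i^*Q_{ti}$ and assume $\hat p_t\ne0$ for all $t\in\mathcal{T}$. Set $M_{u_i}=\sum_{j}C|Q_{ij}|-1$, $M_{v_i}=\sum_jC|Q_{ij}|+1$ for $i\in[m]$, and $l_t=-C\sum_{i=1}^m|Q_{ti}|$, $h_t=C\sum_{i=1}^m|Q_{ti}|$ for $t\in\mathcal{T}$. Consider the MILP $$P_C(\mathbf{y}):\ \max\ \sum_{t\in\mathcal{T}}c_t$$ over the variables and subject to all constraints of the sample-wise MILP $P(\mathbf{y})$ (namely $\boldsymbol{\alpha},\tilde{\mathbf{y}},\mathbf{z},\mathbf{u},\mathbf{v}\in\mathbb{R}^m$, $\mathbf{y}',\mathbf{s},\mathbf{t}\in\{0,1\}^m$, $\mathbf{R}\in\mathbb{R}^{m\times m}$ with $\sum_i(1-y_i\tilde y_i)\le2\lfloor\epsilon m\rfloor$ and, for all $i,j\in[m]$: $\tilde y_i=2y_i'-1$; $\sum_jR_{ij}Q_{ij}-1-u_i+v_i=0$; $u_i,v_i\ge0$; $-C(1+\tilde y_i)\le R_{ij}+z_j\le C(1+\tilde y_i)$; $-C(1-\tilde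 y_i)\le R_{ij}-z_j\le C(1-\tilde y_i)$; $-\alpha_i\le z_i\le\alpha_i$; $\alpha_i-C(1-\tilde y_i)\le z_i\le C(1+\tilde y_i)-\alpha_i$; $u_i\le M_{u_i}s_i$; $\alpha_i\le C(1-s_i)$; $v_i\le M_{v_i}t_i$; $\alpha_i\ge Ct_i$), together with additional variables $c_t\in\{0,1\}$ and $p_t\in\mathbb{R}$ for $t\in\mathcal{T}$ and constraints: $p_t=\sum_{i=1}^m z_iQ_{ti}$ for all $t\in\mathcal{T}$; for all $t$ with $\hat p_t>0$: $p_t\le h_t(1-c_t)$ and $p_t\ge l_tc_t$; for all $t$ with $\hat p_t<0$: $p_t\ge l_t(1-c_t)$ and $p_t\le h_tc_t$. Then the optimal value of $P_C(\mathbf{y})$ equals the maximum number of test nodes that are simultaneously certifiably non-robust, i.e. $\max\big\{|\{t\in\mathcal{T}:\operatorname{sign}(\hat p_t)\sum_{i=1}^m\tilde y_i\alpha_iQ_{ti}\le 0\}| : \tilde{\mathbf{y}}\in\mathcal{A}(\mathbf{y}),\ \boldsymbol\alpha\in\mathcal{S}(\tilde{\mathbf{y}})\big\}$.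
   Context: Binary classification with $m$ labeled nodes. For $\tilde{\mathbf{y}}\in\{-1,1\}^m$, the bias-free kernel SVM dual is $D(\tilde{\mathbf{y}}):\ \min_{\boldsymbol\alpha}-\sum_i\alpha_i+\tfrac12\sum_{i,j}\tilde y_i\tilde y_j\alpha_i\alpha_jQ_{ij}$ s.t. $0\le\alpha_i\le C$ for all $i\in[m]$; $\mathcal{S}(\tilde{\mathbf{y}})$ is its set of optimal solutions; the prediction score of node $t$ is $p_t=\sum_i\tilde y_i\alpha_iQ_{ti}$ and the predicted class is its sign. The adversary with budget $\epsilon\in[0,1]$ chooses one $\tilde{\mathbf{y}}\in\mathcal{A}(\mathbf{y})=\{\tilde{\mathbf{y}}\in\{-1,1\}^m:\|\tilde{\mathbf{y}}-\mathbf{y}\|_0\le\lfloor\epsilon m\rfloor\}$ used for all test nodes simultaneously. A test node $t$ counts as non-robust under $(\tilde{\mathbf{y}},\boldsymbol\alpha)$ if $\operatorname{sign}(\hat p_t)p_t\le0$. *)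

From HB Require Import structures.
From mathcomp Require Import all_boot all_order all_algebra.
From mathcomp Require Import reals.
Set Implicit Arguments. Unset Strict Implicit. Unset Printing Implicit Defensive.
Import Order.TTheory GRing.Theory Num.Theory.
Local Open Scope ring_scope.

Section SVM.
Variable R : realType.

Definition pm1 (m : nat) (v : 'I_m -> R) := forall i, v i = 1 \/ v i = -1.
Definition binR (b : R) := b = 0 \/ b = 1.

Definition sym_psd (m : nat) (Q : 'M[R]_m) :=
  Q^T = Q /\ forall x : 'rV[R]_m, 0 <= (x *m Q *m x^T) 0 0.

(* bias-free kernel SVM dual objective for labels yt *)
Definition dual_obj (m : nat) (Q : 'M[R]_m) (yt a : 'I_m -> R) : R :=
  - (\sum_i a i) + 2^-1 * \sum_i \sum_j yt i * yt j * a i * a j * Q i j.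

Definition in_box (m : nat) (C : R) (a : 'I_m -> R) := forall i, 0 <= a i <= C.

Definition svm_opt (m : nat) (C : R) (Q : 'M[R]_m) (yt a : 'I_m -> R) :=
  in_box C a /\ forall b, in_box C b -> dual_obj Q yt a <= dual_obj Q yt b.

Definition budget (m : nat) (eps : R) : int := Num.floor (eps * m%:R).

Definition adm (m : nat) (eps : R) (y yt : 'I_m -> R) :=
  pm1 yt /\ (#|[set i | yt i != y i]|%:Z <= budget m eps).

Definition n_nonrobust (m : nat) (T : finType) (Qt : T -> 'I_m -> R)
    (phat : T -> R) (yt a : 'I_m -> R) : nat :=
  #|[set t | Num.sg (phat t) * (\sum_i yt i * a i * Qt t i) <= 0]|.

Definition PC_feasible (m : nat) (T : finType) (C eps : R) (y : 'I_m -> R)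
    (Q : 'M[R]_m) (Qt : T -> 'I_m -> R) (phat : T -> R)
    (alpha yt z u v yp s tt : 'I_m -> R) (Rm : 'I_m -> 'I_m -> R)
    (c p : T -> R) : Prop :=
  let Mu i := \sum_j C * `|Q i j| - 1 in
  let Mv i := \sum_j C * `|Q i j| + 1 in
  let l t := - (C * \sum_i `|Qt t i|) in
  let h t := C * \sum_i `|Qt t i| in
  [/\ (forall i, binR (yp i) /\ binR (s i) /\ binR (tt i)),
      \sum_i (1 - y i * yt i) <= 2 * (budget m eps)%:~R,
      (forall i, [/\ yt i = 2 * yp i - 1,
          \sum_j Rm i j * Q i j - 1 - u i + v i = 0,
          0 <= u i, 0 <= v i &
          [/\ -alpha i <= z i <= alpha i,
              alpha i - C * (1 - yt i) <= z i <= C * (1 + yt i) - alpha i,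
              u i <= Mu i * s i /\ alpha i <= C * (1 - s i) &
              v i <= Mv i * tt i /\ alpha i >= C * tt i]]),
      (forall i j, - (C * (1 + yt i)) <= Rm i j + z j <= C * (1 + yt i)
                /\ - (C * (1 - yt i)) <= Rm i j - z j <= C * (1 - yt i)) &
      forall t, [/\ binR (c t), p t = \sum_i z i * Qt t i,
          (0 < phat t -> p t <= h t * (1 - c t) /\ p t >= l t * c t) &
          (phat t < 0 -> p t >= l t * (1 - c t) /\ p t <= h t * c t)]].

End SVM.

From HB Require Import structures.
From mathcomp Require Import all_boot all_order all_algebra.
From mathcomp Require Import boolp reals ring lra.
Import Order.TTheory GRing.Theory Num.Theory.
Set Implicit Arguments. Unset Strict Implicit.
Local Open Scope ring_scope.

(* The dual D(yt) is a convex quadratic program over a box (Q is PSD), so its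
   optimal solutions are exactly the box points satisfying the KKT conditions.
   Since yt is a sign vector, the big-M constraints of P_C(y) linearize
   z = yt .* alpha and R = yt z^T exactly, u - v is then the gradient of the
   dual, and the binaries s, t encode complementarity.  Hence the feasible
   points of P_C(y) are the pairs (yt, alpha) with yt in A(y) and
   alpha in S(yt), where c_t = 1 is possible only for a non-robust test node t,
   and c_t = [t non-robust] is always feasible: both optima are the same
   maximum. *)

Lemma ge0_small_steps (R : realFieldType) (K g r : R) : 0 <= K -> 0 < r ->
  (forall dl, 0 < dl <= r -> 0 <= dl * g + 2^-1 * (dl ^+ 2 * K)) -> 0 <= g.
Proof.
move=> K0 r0 steps; rewrite leNgt; apply/negP => g0.
(* The step min(r, -g/(K+1)) makes the quadratic term at most half the linear one. *)
set dl := Num.min r (- g / (K + 1)).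
have dl_gt0 : 0 < dl by rewrite lt_min r0 divr_gt0 ?oppr_gt0 //; lra.
have dlK : dl * (K + 1) <= - g.
  by rewrite -ler_pdivlMr ?ge_min ?lexx ?orbT //; lra.
have := steps dl; rewrite dl_gt0 ge_min lexx /= => /(_ isT).
nra.
Qed.

Section SvmDual.
Variables (R : realType) (m : nat) (Q : 'M[R]_m).
Hypothesis Qsym : forall i j, Q j i = Q i j.

Definition dual_grad (yt a : 'I_m -> R) i := yt i * \sum_j yt j * a j * Q i j - 1.
Definition dual_qform (yt d : 'I_m -> R) :=
  \sum_i \sum_j yt i * yt j * d i * d j * Q i j.

Lemma dual_objD (yt a d : 'I_m -> R) :
  dual_obj Q yt (fun i => a i + d i) - dual_obj Q yt a
  = \sum_i d i * dual_grad yt a i + 2^-1 * dual_qform yt d.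
Proof.
set X := \sum_i \sum_j yt i * yt j * d i * a j * Q i j.
have quadD : \sum_i \sum_j yt i * yt j * (a i + d i) * (a j + d j) * Q i j =
    \sum_i \sum_j yt i * yt j * a i * a j * Q i j + (X + X) + dual_qform yt d.
  rewrite {2}/X (exchange_big _ _ _ _ _ (fun i j => yt i * yt j * d i * a j * Q i j)).
  rewrite /X /dual_qform -!big_split /=; apply: eq_bigr => i _.
  rewrite -!big_split /=; apply: eq_bigr => j _; rewrite [Q j i]Qsym; ring.
have gradE : \sum_i d i * dual_grad yt a i = X - \sum_i d i.
  rewrite -sumrB; apply: eq_bigr => i _.
  rewrite /dual_grad mulrBr mulr1 !mulr_sumr; congr (_ - _).
  by apply: eq_bigr => j _; ring.
rewrite /dual_obj quadD gradE big_split /=.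
by field.
Qed.

Hypothesis Qpsd : forall x : 'rV[R]_m, 0 <= (x *m Q *m x^T) 0 0.

Lemma dual_qform_ge0 yt d : 0 <= dual_qform yt d.
Proof.
have := Qpsd (\row_j (yt j * d j)); rewrite !mxE.
under eq_bigr do rewrite !mxE mulr_suml.
rewrite exchange_big /=; congr (0 <= _); apply: eq_bigr => i _.
by apply: eq_bigr => j _; rewrite !mxE; ring.
Qed.

Definition kkt (C : R) yt a := forall i,
  (a i < C -> 0 <= dual_grad yt a i) /\ (0 < a i -> dual_grad yt a i <= 0).

Lemma kkt_svm_opt C yt a : in_box C a -> kkt C yt a -> svm_opt C Q yt a.
Proof.
move=> a_box a_kkt; split=> // b b_box.
have -> : b = (fun i => a i + (b i - a i)) by apply/funext => i; rewrite addrC subrK.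
rewrite -subr_ge0 dual_objD addr_ge0 ?mulr_ge0 ?invr_ge0 ?ler0n ?dual_qform_ge0 //.
apply: sumr_ge0 => i _; have [lowC upp0] := a_kkt i.
move: (b_box i) (a_box i) => /andP[b0 bC] /andP[a0 aC].
case: (ltrgtP (a i) (b i)) => ab.
- by have := lowC (lt_le_trans ab bC); nra.
- by have := upp0 (le_lt_trans b0 ab); nra.
- by rewrite ab subrr mul0r.
Qed.

Definition coord_step (i : 'I_m) (dl : R) (k : 'I_m) := (k == i)%:R * dl.

Lemma sum_coord_stepM i dl (F : 'I_m -> R) :
  \sum_k coord_step i dl k * F k = dl * F i.
Proof.
rewrite (bigD1 i) //= big1 ?addr0 => [|k /negbTE ki]; rewrite /coord_step ?ki ?eqxx.
  by rewrite mul1r.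
by rewrite !mul0r.
Qed.

Lemma dual_qform_coord_step yt i dl :
  dual_qform yt (coord_step i dl) = dl ^+ 2 * (yt i * yt i * Q i i).
Proof.
rewrite /dual_qform.
have rowE k : \sum_j yt k * yt j * coord_step i dl k * coord_step i dl j * Q k j
    = coord_step i dl k * (dl * (yt k * yt i * Q k i)).
  rewrite -(sum_coord_stepM i dl (fun j => yt k * yt j * Q k j)) mulr_sumr.
  by apply: eq_bigr => j _; ring.
under eq_bigr do rewrite rowE.
by rewrite sum_coord_stepM expr2; ring.
Qed.

Lemma svm_opt_coord_step C yt a i dl : svm_opt C Q yt a -> 0 <= a i + dl <= C ->
  0 <= dl * dual_grad yt a i + 2^-1 * (dl ^+ 2 * (yt i * yt i * Q i i)).
Proof.
move=> [a_box a_min] step_box.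
have b_box : in_box C (fun k => a k + coord_step i dl k).
  move=> k /=; rewrite /coord_step; case: (eqVneq k i) => [->|_].
    by rewrite mul1r.
  by rewrite mul0r addr0; exact: a_box.
have := a_min _ b_box; rewrite -subr_ge0 dual_objD.
by rewrite sum_coord_stepM dual_qform_coord_step.
Qed.

Lemma svm_opt_kkt C yt a : svm_opt C Q yt a -> kkt C yt a.
Proof.
move=> a_opt i; have /andP[a0 aC] := a_opt.1 i.
have K0 : 0 <= yt i * yt i * Q i i.
  by have := dual_qform_ge0 yt (coord_step i 1); rewrite dual_qform_coord_step expr1n mul1r.
split=> [aC_lt | a0_lt].
- apply: (ge0_small_steps K0 (_ : 0 < C - a i)) => [|dl /andP[dl0 dlC]]; first lra.
  by apply: svm_opt_coord_step a_opt _; apply/andP; split; lra.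
- rewrite -oppr_ge0; apply: (ge0_small_steps K0 a0_lt) => dl /andP[dl0 dla].
  have := svm_opt_coord_step a_opt (_ : 0 <= a i + - dl <= C).
  by rewrite sqrrN mulNr mulrN; apply; apply/andP; split; lra.
Qed.
End SvmDual.

Section BigMEncoding.
Variable R : realType.
Implicit Types (C a b g h M p ph r s t u v z : R).

Definition sign_lbl b := b = 1 \/ b = -1.

Lemma norm_sign_lbl b : sign_lbl b -> `|b| = 1.
Proof. by move=> [->|->]; rewrite ?normrN normr1. Qed.

Lemma sign_bigM_bounds C b a : sign_lbl b -> 0 <= a <= C ->
  -a <= b * a <= a /\ a - C * (1 - b) <= b * a <= C * (1 + b) - a.
Proof. by move=> [->|->] /andP[a0 aC]; rewrite ?mulN1r ?mul1r; split; apply/andP; split; lra. Qed.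

Lemma sign_bigM_boundsE C b a z : sign_lbl b -> -a <= z <= a ->
  a - C * (1 - b) <= z <= C * (1 + b) - a -> z = b * a.
Proof. by move=> [->|->] /andP[? ?] /andP[? ?]; lra. Qed.

Lemma product_bigM_bounds C b z : sign_lbl b -> `|z| <= C ->
  - (C * (1 + b)) <= b * z + z <= C * (1 + b) /\
  - (C * (1 - b)) <= b * z - z <= C * (1 - b).
Proof.
by move=> [->|->]; rewrite ler_norml => /andP[? ?]; split; apply/andP; split; lra.
Qed.

Lemma product_bigM_boundsE C b z r : sign_lbl b ->
  - (C * (1 + b)) <= r + z <= C * (1 + b) ->
  - (C * (1 - b)) <= r - z <= C * (1 - b) -> r = b * z.
Proof. by move=> [->|->] /andP[? ?] /andP[? ?]; lra. Qed.

(* Complementarity: a positive gradient forces [a = 0], a negative one [a = C]. *)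
Lemma kkt_slack_bigM C a g M : 0 < C -> 0 <= a <= C ->
  (a < C -> 0 <= g) -> (0 < a -> g <= 0) -> `|g + 1| <= M ->
  (Num.max g 0 <= (M - 1) * (a == 0)%:R /\ a <= C * (1 - (a == 0)%:R)) /\
  (Num.max g 0 - g <= (M + 1) * (a == C)%:R /\ a >= C * (a == C)%:R).
Proof.
move=> C0 /andP[a0 aC] g_low g_upp; rewrite ler_norml => /andP[gM Mg].
have [a_eq0|a_ne0] := eqVneq a 0.
  have g0 : 0 <= g by apply: g_low; rewrite a_eq0.
  rewrite a_eq0 eq_sym (gt_eqF C0) max_l //.
  by split; split=> /=; lra.
have a_pos : 0 < a by rewrite lt_neqAle eq_sym a_ne0.
have g0 := g_upp a_pos; rewrite (max_r g0).
have [->|a_neC] := eqVneq a C; first by split; split=> /=; lra.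
have := g_low (_ : a < C); rewrite lt_neqAle a_neC aC => /(_ isT) g_ge0.
by split; split=> /=; lra.
Qed.

Lemma kkt_slack_bigME C a u v s t M M' : binR s -> binR t -> 0 <= u -> 0 <= v ->
  u <= M * s /\ a <= C * (1 - s) -> v <= M' * t /\ a >= C * t ->
  (a < C -> 0 <= u - v) /\ (0 < a -> u - v <= 0).
Proof. by move=> [->|->] [->|->] ? ? [? ?] [? ?]; split=> ?; lra. Qed.

Lemma nonrobust_bigM ph p h : `|p| <= h -> let c := if Num.sg ph * p <= 0 then 1 else 0 in
  (0 < ph -> p <= h * (1 - c) /\ p >= - h * c) /\
  (ph < 0 -> p >= - h * (1 - c) /\ p <= h * c).
Proof.
rewrite ler_norml => /andP[p_low p_upp] /=; split=> ph0.
  by rewrite gtr0_sg // mul1r; case: (lerP p 0) => ?; split; lra.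
by rewrite ltr0_sg // mulN1r; case: (lerP (- p) 0) => ?; split; lra.
Qed.

Lemma nonrobust_bigME ph p h c : ph != 0 -> binR c ->
  (0 < ph -> p <= h * (1 - c) /\ p >= - h * c) ->
  (ph < 0 -> p >= - h * (1 - c) /\ p <= h * c) ->
  c <= if Num.sg ph * p <= 0 then 1 else 0.
Proof.
move=> ph_ne0 [->|->] pos neg; first by case: (_ <= 0).
have [ph0|ph0|ph0] := ltgtP ph 0; last by move: ph_ne0; rewrite ph0 eqxx.
  by rewrite ltr0_sg // mulN1r; have [? ?] := neg ph0; rewrite oppr_le0 (_ : 0 <= p) //; lra.
by rewrite gtr0_sg // mul1r; have [? ?] := pos ph0; rewrite (_ : p <= 0) //; lra.
Qed.
End BigMEncoding.

Lemma sum_indicator_card (R : numDomainType) (I : finType) (P : pred I) :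
  \sum_i (if P i then 1 else 0) = #|[set i | P i]|%:R :> R.
Proof.
rewrite -sum1dep_card natr_sum [RHS]big_mkcond /=.
by apply: eq_bigr => i _; case: (P i).
Qed.

Lemma flip_count (R : realType) m (y yt : 'I_m -> R) : pm1 y -> pm1 yt ->
  \sum_i (1 - y i * yt i) = 2 * #|[set i | yt i != y i]|%:R.
Proof.
move=> y_pm yt_pm; rewrite -sum_indicator_card mulr_sumr.
have m1_neq1 : ((-1 : R) == 1) = false by apply: lt_eqF; lra.
have one_neqm1 : ((1 : R) == -1) = false by apply: gt_eqF; lra.
apply: eq_bigr => i _; case: (y_pm i) => ->; case: (yt_pm i) => ->;
  by rewrite ?eqxx ?m1_neq1 ?one_neqm1 /=; lra.
Qed.

Lemma norm_sum_le (R : realType) m (C : R) (z w : 'I_m -> R) :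
  (forall i, `|z i| <= C) -> `|\sum_i z i * w i| <= \sum_i C * `|w i|.
Proof.
move=> zC; apply: le_trans (ler_norm_sum _ _ _) _.
by apply: ler_sum => i _; rewrite normrM ler_wpM2r.
Qed.

Section CollectiveMilp.
Variables (R : realType) (m : nat) (T : finType) (C eps : R) (y : 'I_m -> R).
Variables (Q : 'M[R]_m) (Qt : T -> 'I_m -> R) (phat : T -> R).
Hypotheses (C_gt0 : 0 < C) (y_pm : pm1 y) (Qsym : forall i j, Q j i = Q i j).
Hypothesis Qpsd : forall x : 'rV[R]_m, 0 <= (x *m Q *m x^T) 0 0.

Lemma PC_feasible_of_svm_opt yt a : adm eps y yt -> svm_opt C Q yt a ->
  exists alpha yt' z u v yp s tt Rm c p,
    PC_feasible C eps y Q Qt phat alpha yt' z u v yp s tt Rm c p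
    /\ \sum_t c t = (n_nonrobust Qt phat yt a)%:R.
Proof.
move=> [yt_pm flips] a_opt; have a_box := a_opt.1.
have a_kkt := svm_opt_kkt Qsym Qpsd a_opt.
have z_le i : `|yt i * a i| <= C.
  by case/andP: (a_box i) => a0 aC; rewrite normrM norm_sign_lbl // mul1r ger0_norm.
pose g := dual_grad Q yt a.
have gradE i : \sum_j yt i * (yt j * a j) * Q i j = g i + 1.
  by rewrite /g /dual_grad mulr_sumr subrK; apply: eq_bigr => j _; ring.
exists a, yt, (fun i => yt i * a i), (fun i => Num.max (g i) 0),
  (fun i => Num.max (g i) 0 - g i), (fun i => (yt i + 1) / 2),
  (fun i => (a i == 0)%:R), (fun i => (a i == C)%:R),
  (fun i j => yt i * (yt j * a j)),
  (fun t => if Num.sg (phat t) * (\sum_i yt i * a i * Qt t i) <= 0 then 1 else 0),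
  (fun t => \sum_i yt i * a i * Qt t i).
split; last by rewrite sum_indicator_card.
split.
- move=> i; rewrite /binR; split; [|split].
  + by case: (yt_pm i) => ->; [right | left]; lra.
  + by case: (a i == 0); [right | left].
  + by case: (a i == C); [right | left].
- rewrite flip_count // ler_pM2l; last lra.
  by rewrite -(ler_int R) in flips.
- move=> i; rewrite gradE; split; [lra | ring | by rewrite le_max lexx orbT |
    by rewrite subr_ge0 le_max lexx |].
  have [kkt_low kkt_upp] := a_kkt i.
  have [z_low z_upp] := sign_bigM_bounds (yt_pm i) (a_box i).
  have grad_bound : `|g i + 1| <= \sum_j C * `|Q i j|.
    by rewrite -gradE; apply: norm_sum_le => j; rewrite normrM norm_sign_lbl // mul1r.
  have [s_bnds t_bnds] := kkt_slack_bigM C_gt0 (a_box i) kkt_low kkt_upp grad_bound.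
  by split.
- move=> i j; apply: product_bigM_bounds; first exact: yt_pm.
  exact: z_le.
- move=> t; have p_le : `|\sum_i yt i * a i * Qt t i| <= C * \sum_i `|Qt t i|.
    by rewrite mulr_sumr; apply: norm_sum_le.
  have [pos neg] := nonrobust_bigM (phat t) p_le.
  split=> //; first by rewrite /binR; case: (_ <= 0); [right | left].
Qed.

Hypothesis phat_neq0 : forall t, phat t != 0.

Lemma svm_opt_of_PC_feasible alpha yt z u v yp s tt Rm c p :
  PC_feasible C eps y Q Qt phat alpha yt z u v yp s tt Rm c p ->
  [/\ adm eps y yt, svm_opt C Q yt alpha
    & \sum_t c t <= (n_nonrobust Qt phat yt alpha)%:R].
Proof.
move=> [bins flipsR rows Rm_bnds tests].
have yt_pm : pm1 yt.
  move=> i; have [-> _ _ _ _] := rows i.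
  by case: (bins i) => [[->|->] _]; [right | left]; lra.
have zE i : z i = yt i * alpha i.
  by have [_ _ _ _ [z_low z_upp _ _]] := rows i; apply: sign_bigM_boundsE z_upp.
have alpha_box : in_box C alpha.
  move=> i; have [_ _ _ _ [/andP[? ?] _ [_ aC] _]] := rows i.
  have a0 : 0 <= alpha i by lra.
  have [_ [[s_eq|s_eq] _]] := bins i; rewrite s_eq in aC.
    by rewrite a0 -[C]mulr1 -[1]subr0.
  by rewrite a0 (le_trans aC) // subrr mulr0 ltW.
have RmE i j : Rm i j = yt i * z j.
  by have [Rz_plus Rz_minus] := Rm_bnds i j; apply: product_bigM_boundsE Rz_minus.
have gradE i : dual_grad Q yt alpha i = u i - v i.
  have [_ row_eq _ _ _] := rows i.
  suff : \sum_j Rm i j * Q i j = dual_grad Q yt alpha i + 1 by lra.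
  rewrite /dual_grad subrK mulr_sumr.
  by apply: eq_bigr => j _; rewrite RmE zE; ring.
have alpha_kkt : kkt Q C yt alpha.
  move=> i; rewrite gradE; have [_ _ u0 v0 [_ _ s_bnds t_bnds]] := rows i.
  by have [_ [s01 t01]] := bins i; apply: kkt_slack_bigME s01 t01 u0 v0 s_bnds t_bnds.
split.
- split=> //; rewrite -(ler_int R).
  by move: flipsR; rewrite flip_count // ler_pM2l //; lra.
- exact: kkt_svm_opt.
- rewrite /n_nonrobust -sum_indicator_card; apply: ler_sum => t _.
  have [c01 pE pos neg] := tests t.
  have -> : \sum_i yt i * alpha i * Qt t i = p t.
    by rewrite pE; apply: eq_bigr => i _; rewrite zE.
  exact: nonrobust_bigME (phat_neq0 t) c01 pos neg.
Qed.
End CollectiveMilp.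

Lemma ex_maxn_prop (P : nat -> Prop) n0 b : P n0 -> (forall n, P n -> n <= b)%N ->
  exists2 N, P N & forall n, P n -> (n <= N)%N.
Proof.
move=> P_n0 P_le; have P_ex : exists n, `[< P n >] by exists n0; apply/asboolP.
have [N /asboolP P_N N_max] := ex_maxnP P_ex (fun n => P_le n \o (@asboolP _)).
by exists N => // n /asboolP; apply: N_max.
Qed.

Theorem theorem2 (R : realType) (m : nat) (T : finType) (C eps : R)
    (y : 'I_m -> R) (Q : 'M[R]_m) (Qt : T -> 'I_m -> R) (alpha_star : 'I_m -> R) :
  (0 < m)%N -> 0 < C -> 0 <= eps <= 1 -> pm1 y -> sym_psd Q ->
  svm_opt C Q y alpha_star ->
  let phat t := \sum_i y i * alpha_star i * Qt t i in
  (forall t, phat t != 0) ->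
  exists N : nat,
    ((exists yt a, adm eps y yt /\ svm_opt C Q yt a /\ n_nonrobust Qt phat yt a = N)
     /\ (forall yt a, adm eps y yt -> svm_opt C Q yt a -> (n_nonrobust Qt phat yt a <= N)%N))
    /\
    ((exists alpha yt z u v yp s tt Rm c p,
        PC_feasible C eps y Q Qt phat alpha yt z u v yp s tt Rm c p
        /\ \sum_t c t = N%:R)
     /\ (forall alpha yt z u v yp s tt Rm c p,
        PC_feasible C eps y Q Qt phat alpha yt z u v yp s tt Rm c p ->
        \sum_t c t <= N%:R)).
Proof.
move=> _ C_gt0 /andP[eps0 _] y_pm [Qtr Qpsd] y_opt phat phat_neq0.
have Qsym i j : Q j i = Q i j by rewrite -{1}Qtr mxE.
pose attained n := exists yt a,
  adm eps y yt /\ svm_opt C Q yt a /\ n_nonrobust Qt phat yt a = n.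
have y_adm : adm eps y y.
  split=> //; rewrite (_ : [set i | y i != y i] = set0) ?cards0.
    by rewrite /budget floor_ge0 mulr_ge0 ?ler0n.
  by apply/setP => i; rewrite !inE eqxx.
have [N [yt [a [yt_adm [a_opt a_N]]]] N_max] :
    exists2 N, attained N & forall n, attained n -> (n <= N)%N.
  apply: (@ex_maxn_prop attained _ #|T|); first by exists y, alpha_star.
  by move=> n [yt [a [_ [_ <-]]]]; apply: max_card.
exists N; split.
  split; first by exists yt, a.
  by move=> yt' a' yt'_adm a'_opt; apply: N_max; exists yt', a'.
split.
  by rewrite -a_N; apply: PC_feasible_of_svm_opt.
move=> alpha yt' z u v yp s tt Rm c p feas.
have [yt'_adm alpha_opt c_le] := svm_opt_of_PC_feasible C_gt0 y_pm Qsym Qpsd phat_neq0 feas.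
apply: le_trans c_le _; rewrite ler_nat; apply: N_max.
by exists yt', alpha.
Qed.
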